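(* Let $v$ be a weight on $[0,1)$ such that $\sup_{t\in[0,1)}\|C_t\|_{H^\infty_v\to H^\infty_v}<\infty$. Then $C_1$ maps $H^\infty_v$ into $H^\infty_v$ and $C_1\colon H^\infty_v\to H^\infty_v$ is continuous.
   Context: $\mathbb{D}=\{z\in\mathbb{C}:|z|<1\}$ and $H(\mathbb{D})$ is the space of holomorphic functions on $\mathbb{D}$. A weight is a continuous non-increasing function $v\colon[0,1)\to(0,\infty)$, extended to $\mathbb{D}$ by $v(z):=v(|z|)$. $H^\infty_v=\{f\in H(\mathbb{D}):\|f\|_{\infty,v}:=\sup_{z\in\mathbb{D}}|f(z)|v(z)<\infty\}$ with norm $\|\cdot\|_{\infty,v}$. For $t\in[0,1]$ the generalized Cesàro operator $C_t$ is defined on $f\in H(\mathbb{D})$ by $C_tf(0)=f(0)$ and $C_tf(z)=\frac{1}{z}\int_0^z\frac{f(\xi)}{1-t\xi}\,d\xi$ for $z\in\mathbb{D}\setminus\{0\}$; for $t\in[0,1)$, $C_t$ is a bounded operator on $H^\infty_v$. *)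

From Stdlib Require Import Reals ClassicalEpsilon.
From Coquelicot Require Import Coquelicot.

Open Scope R_scope.

Definition in_disc (z : C) : Prop := Cmod z < 1.

(* A weight: continuous non-increasing v : [0,1) -> (0,oo).
   Only the values on [0,1) matter; continuity is continuity of the
   restriction to [0,1). *)
Definition is_weight (v : R -> R) : Prop :=
  (forall r, 0 <= r < 1 -> 0 < v r) /\
  (forall r s, 0 <= r -> r <= s -> s < 1 -> v s <= v r) /\
  (forall r, 0 <= r < 1 -> forall eps, 0 < eps -> exists delta, 0 < delta /\
     forall s, 0 <= s < 1 -> Rabs (s - r) < delta -> Rabs (v s - v r) < eps).

Definition holomorphic_on_disc (f : C -> C) : Prop :=
  forall z, in_disc z -> ex_derive (K := C_AbsRing) (V := C_NormedModule) f z.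

Definition wnorm (v : R -> R) (f : C -> C) : Rbar :=
  Lub_Rbar (fun r => exists z, in_disc z /\ r = Cmod (f z) * v (Cmod z)).

Definition in_Hv (v : R -> R) (f : C -> C) : Prop :=
  holomorphic_on_disc f /\ Rbar_lt (wnorm v f) p_infty.

(* Complex line integral of g along the segment [0, z], parametrized by
   xi = s z, s in [0,1]:  int_0^z g(xi) dxi = int_0^1 g(s z) z ds. *)
Definition seg_integral (g : C -> C) (z : C) : C :=
  RInt (V := C_R_CompleteNormedModule)
       (fun s : R => Cmult (g (RtoC s * z)%C) z) 0 1.

Definition cesaro (t : R) (f : C -> C) : C -> C :=
  fun z => if excluded_middle_informative (z = RtoC 0) then f (RtoC 0)
           else Cmult (Cinv z)
                  (seg_integral (fun xi => Cdiv (f xi) (Cminus (RtoC 1) (Cmult (RtoC t) xi))) z).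

(* Operator norm of T on H^oo_v: sup { ||T f||_v : f in H^oo_v, ||f||_v <= 1 }
   (as an extended real; the set below is the down-closure of these norms,
   so the value is +oo when some ||T f||_v is +oo). *)
Definition opnorm (v : R -> R) (T : (C -> C) -> (C -> C)) : Rbar :=
  Lub_Rbar (fun r => exists f, in_Hv v f /\ Rbar_le (wnorm v f) 1 /\
                              Rbar_le r (wnorm v (T f))).

Definition fsub (f g : C -> C) : C -> C := fun z => Cminus (f z) (g z).

From Stdlib Require Import Reals Lra ClassicalEpsilon.
From Coquelicot Require Import Coquelicot.
Open Scope R_scope.

(* [C_t f z] is the mean of the kernel [f xi / (1 - t xi)] over the segment [0, z].
   For [|xi| <= r = |z|] the kernels for [t] and [1] differ by at most
   [|f xi| (1 - t) / (1 - r)^2], so [C_t f z -> C_1 f z] as [t -> 1] and the uniform bound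
   [||C_t|| <= M] passes to the limit pointwise: [|C_1 f z| v(z) <= |M| ||f||_v].  By
   linearity of [C_1] this is also continuity.  Holomorphy of [C_1 f] comes from Goursat's
   lemma (by quadrisection of triangles), which makes [w |-> int_[0,w] f xi / (1 - xi) dxi]
   a primitive of its integrand on the disc. *)

Lemma Cmod_minus_sym (a b : C) : Cmod (a - b)%C = Cmod (b - a)%C.
Proof. rewrite <- Cmod_opp. f_equal. ring. Qed.

Lemma Cmod_le_add_minus (a b : C) : Cmod a <= Cmod b + Cmod (a - b)%C.
Proof. replace a with (b + (a - b))%C at 1 by ring. apply Cmod_triangle. Qed.

Lemma Cmod_RtoC_mult (s : R) (x : C) : Cmod (RtoC s * x)%C = Rabs s * Cmod x.
Proof. rewrite Cmod_mult, Cmod_R. reflexivity. Qed.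

Lemma Cmod_half (x : C) : Cmod (x / RtoC 2)%C = Cmod x / 2.
Proof.
  rewrite Cmod_div, Cmod_R, Rabs_pos_eq by (try lra; intro H; apply RtoC_inj in H; lra).
  reflexivity.
Qed.

Definition Ccontinuous_at (g : C -> C) (z : C) : Prop :=
  forall eps, 0 < eps -> exists del, 0 < del /\
    forall w, Cmod (w - z)%C < del -> Cmod (g w - g z)%C < eps.

Definition is_Cderive (f : C -> C) (z l : C) : Prop :=
  forall eps, 0 < eps -> exists del, 0 < del /\
    forall w, Cmod (w - z)%C < del ->
      Cmod (f w - f z - l * (w - z))%C <= eps * Cmod (w - z)%C.

Lemma is_Cderive_continuous f z l : is_Cderive f z l -> Ccontinuous_at f z.
Proof.
  intros Hf eps Heps.
  destruct (Hf 1 Rlt_0_1) as [d [Hd Hfd]].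
  pose proof (Cmod_ge_0 l).
  exists (Rmin d (eps / (1 + Cmod l))). split.
  { apply Rmin_pos; auto. apply Rdiv_lt_0_compat; lra. }
  intros w Hw.
  pose proof (Rmin_l d (eps / (1 + Cmod l))). pose proof (Rmin_r d (eps / (1 + Cmod l))).
  specialize (Hfd w ltac:(lra)).
  replace (f w - f z)%C with ((f w - f z - l * (w - z)) + l * (w - z))%C by ring.
  eapply Rle_lt_trans; [apply Cmod_triangle|]. rewrite Cmod_mult.
  assert (Hsmall : (1 + Cmod l) * Cmod (w - z)%C < eps).
  { assert (Hw' : Cmod (w - z)%C < eps / (1 + Cmod l)) by lra.
    apply (Rmult_lt_compat_l (1 + Cmod l)) in Hw'; [|lra].
    replace ((1 + Cmod l) * (eps / (1 + Cmod l))) with eps in Hw' by (field; lra).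
    exact Hw'. }
  pose proof (Cmod_ge_0 (w - z)%C). nra.
Qed.

Lemma Ccontinuous_minus f g z :
  Ccontinuous_at f z -> Ccontinuous_at g z -> Ccontinuous_at (fun x => f x - g x)%C z.
Proof.
  intros Hf Hg eps Heps.
  destruct (Hf (eps / 2)) as [d1 [Hd1 Hf']]; [lra|].
  destruct (Hg (eps / 2)) as [d2 [Hd2 Hg']]; [lra|].
  exists (Rmin d1 d2). split; [apply Rmin_pos; auto|].
  intros w Hw. pose proof (Rmin_l d1 d2). pose proof (Rmin_r d1 d2).
  specialize (Hf' w ltac:(lra)). specialize (Hg' w ltac:(lra)).
  replace (f w - g w - (f z - g z))%C with ((f w - f z) + - (g w - g z))%C by ring.
  eapply Rle_lt_trans; [apply Cmod_triangle|]. rewrite Cmod_opp. lra.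
Qed.

Lemma is_Cderive_affine (al be z : C) : is_Cderive (fun x => al + be * x)%C z be.
Proof.
  intros eps Heps. exists 1. split; [lra|]. intros w _.
  replace (al + be * w - (al + be * z) - be * (w - z))%C with (RtoC 0) by ring.
  rewrite Cmod_0. pose proof (Cmod_ge_0 (w - z)%C). nra.
Qed.

Lemma Ccontinuous_affine (al be z : C) : Ccontinuous_at (fun x => al + be * x)%C z.
Proof. exact (is_Cderive_continuous _ _ _ (is_Cderive_affine al be z)). Qed.

Lemma Ccontinuous_const (al z : C) : Ccontinuous_at (fun _ => al) z.
Proof.
  intros eps Heps. exists 1. split; [lra|]. intros w _.
  replace (al - al)%C with (RtoC 0) by ring. rewrite Cmod_0. lra.
Qed.

Lemma is_Cderive_ext_loc f g z l :
  (exists r, 0 < r /\ forall w, Cmod (w - z)%C < r -> f w = g w) ->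
  is_Cderive f z l -> is_Cderive g z l.
Proof.
  intros [r [Hr Hfg]] Hf eps Heps.
  destruct (Hf eps Heps) as [d [Hd Hfd]].
  exists (Rmin d r). split; [apply Rmin_pos; auto|].
  intros w Hw. pose proof (Rmin_l d r). pose proof (Rmin_r d r).
  rewrite <- (Hfg w), <- (Hfg z) by (try lra; replace (z - z)%C with (RtoC 0) by ring;
                                     rewrite Cmod_0; lra).
  apply Hfd. lra.
Qed.

Lemma is_Cderive_inv z : z <> RtoC 0 -> is_Cderive Cinv z (- (/ z * / z))%C.
Proof.
  intros Hz eps Heps.
  set (a := Cmod z).
  assert (Ha : 0 < a) by (apply Cmod_gt_0; auto).
  exists (Rmin (a / 2) (eps * (a * a * a) / 2)). split.
  { apply Rmin_pos; [lra|]. apply Rdiv_lt_0_compat; [|lra].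
    repeat apply Rmult_lt_0_compat; lra. }
  intros w Hw.
  pose proof (Rmin_l (a / 2) (eps * (a * a * a) / 2)).
  pose proof (Rmin_r (a / 2) (eps * (a * a * a) / 2)).
  set (m := Cmod (w - z)%C) in *.
  assert (Hb : a / 2 <= Cmod w).
  { pose proof (Cmod_le_add_minus z w) as Hzw. rewrite (Cmod_minus_sym z w) in Hzw.
    fold a m in Hzw. lra. }
  assert (Hw0 : w <> RtoC 0) by (intro E; subst w; rewrite Cmod_0 in Hb; lra).
  replace (/ w - / z - - (/ z * / z) * (w - z))%C with ((w - z) * (w - z) * / w * / z * / z)%C
    by (field; auto).
  rewrite !Cmod_mult, !Cmod_inv by auto. fold a m.
  assert (Hm : 0 <= m) by apply Cmod_ge_0.
  assert (Hinv : / Cmod w <= 2 / a).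
  { replace (2 / a) with (/ (a / 2)) by (field; lra). apply Rinv_le_contravar; lra. }
  apply Rle_trans with (m * m * (2 / a) * / a * / a).
  { repeat (apply Rmult_le_compat_r; [left; apply Rinv_0_lt_compat; lra|]).
    apply Rmult_le_compat_l; nra. }
  replace (m * m * (2 / a) * / a * / a) with (m * (m * 2 / (a * a * a))) by (field; lra).
  rewrite (Rmult_comm eps). apply Rmult_le_compat_l; auto.
  apply Rmult_le_reg_r with (a * a * a); [nra|].
  replace (m * 2 / (a * a * a) * (a * a * a)) with (m * 2) by (field; lra). lra.
Qed.

Local Notation C_abs_module := (AbsRing_NormedModule C_AbsRing).

(* [C_NormedModule] carries the product uniform structure, so its [is_derive] is not
   convertible to the one over [AbsRing_NormedModule C_AbsRing] used by Coquelicot's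
   product rule; both are related through [is_Cderive]. *)
Lemma is_derive_is_Cderive f z l :
  is_derive (K := C_AbsRing) (V := C_NormedModule) f z l <-> is_Cderive f z l.
Proof.
  split.
  - intros [_ Hf] eps Heps.
    destruct (Hf z (fun P HP => HP) (mkposreal eps Heps)) as [d Hd].
    exists d. split; [apply cond_pos|]. intros w Hw.
    rewrite (Cmult_comm l). exact (Hd w Hw).
  - intros Hf. split; [apply is_linear_scal_l|].
    intros x Hx.
    apply (@is_filter_lim_locally_unique C_AbsRing (AbsRing_NormedModule C_AbsRing)) in Hx.
    subst x. intros eps. destruct (Hf eps (cond_pos eps)) as [d [Hd Hfd]].
    exists (mkposreal d Hd). intros w Hw.
    specialize (Hfd w Hw). rewrite (Cmult_comm l) in Hfd. exact Hfd.
Qed.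

Lemma is_derive_abs_is_Cderive f z l :
  is_derive (K := C_AbsRing) (V := C_abs_module) f z l <-> is_Cderive f z l.
Proof.
  split.
  - intros [_ Hf] eps Heps.
    destruct (Hf z (fun P HP => HP) (mkposreal eps Heps)) as [d Hd].
    exists d. split; [apply cond_pos|]. intros w Hw.
    rewrite (Cmult_comm l). exact (Hd w Hw).
  - intros Hf. split; [apply is_linear_scal_l|].
    intros x Hx.
    apply (@is_filter_lim_locally_unique C_AbsRing (AbsRing_NormedModule C_AbsRing)) in Hx.
    subst x. intros eps. destruct (Hf eps (cond_pos eps)) as [d [Hd Hfd]].
    exists (mkposreal d Hd). intros w Hw.
    specialize (Hfd w Hw). rewrite (Cmult_comm l) in Hfd. exact Hfd.
Qed.

Lemma holomorphic_on_disc_iff f :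
  holomorphic_on_disc f <-> forall z, in_disc z -> exists l, is_Cderive f z l.
Proof.
  split; intros Hf z Hz; destruct (Hf z Hz) as [l Hl]; exists l;
    apply is_derive_is_Cderive; exact Hl.
Qed.

Lemma is_Cderive_mult f g z lf lg : is_Cderive f z lf -> is_Cderive g z lg ->
  is_Cderive (fun x => f x * g x)%C z (lf * g z + f z * lg)%C.
Proof.
  rewrite <- !is_derive_abs_is_Cderive. intros Hf Hg.
  apply (is_derive_mult (K := C_AbsRing) f g z lf lg Hf Hg). intros; apply Cmult_comm.
Qed.

Lemma is_Cderive_minus f g z lf lg : is_Cderive f z lf -> is_Cderive g z lg ->
  is_Cderive (fun x => f x - g x)%C z (lf - lg)%C.
Proof.
  rewrite <- !is_derive_abs_is_Cderive. intros Hf Hg.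
  exact (is_derive_minus (K := C_AbsRing) (V := C_abs_module) f g z lf lg Hf Hg).
Qed.

Lemma is_Cderive_const (k z : C) : is_Cderive (fun _ => k) z (RtoC 0).
Proof.
  apply is_derive_abs_is_Cderive.
  exact (is_derive_const (K := C_AbsRing) (V := C_abs_module) k z).
Qed.

Lemma is_Cderive_comp_affine f (al be z l : C) : is_Cderive f (al + be * z)%C l ->
  is_Cderive (fun x => f (al + be * x)%C) z (be * l)%C.
Proof.
  rewrite <- !is_derive_abs_is_Cderive. intros Hf.
  exact (is_derive_comp (K := C_AbsRing) (V := C_abs_module) f (fun x => al + be * x)%C z l be
           Hf (proj2 (is_derive_abs_is_Cderive _ _ _) (is_Cderive_affine al be z))).
Qed.

Lemma holomorphic_on_disc_fsub f g :
  holomorphic_on_disc f -> holomorphic_on_disc g -> holomorphic_on_disc (fsub f g).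
Proof.
  rewrite !holomorphic_on_disc_iff. intros Hf Hg z Hz.
  destruct (Hf z Hz) as [lf Hlf], (Hg z Hz) as [lg Hlg].
  eexists. exact (is_Cderive_minus f g z _ _ Hlf Hlg).
Qed.

Lemma holomorphic_on_disc_scal (c : R) f :
  holomorphic_on_disc f -> holomorphic_on_disc (fun x => RtoC c * f x)%C.
Proof.
  rewrite !holomorphic_on_disc_iff. intros Hf z Hz. destruct (Hf z Hz) as [l Hl].
  eexists. exact (is_Cderive_mult _ f z _ _ (is_Cderive_const (RtoC c) z) Hl).
Qed.

(** * Integrals along segments *)

Definition line_integrand (g : C -> C) (a b : C) (s : R) : C :=
  (g (a + RtoC s * (b - a)) * (b - a))%C.

Definition line_integral (g : C -> C) (a b : C) : C :=
  RInt (V := C_R_CompleteNormedModule) (line_integrand g a b) 0 1.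

Definition continuous_on_segment (g : C -> C) (a b : C) : Prop :=
  forall s, 0 <= s <= 1 -> Ccontinuous_at g (a + RtoC s * (b - a))%C.

Lemma norm_C_R (x : C) : norm (K := R_AbsRing) (V := C_R_NormedModule) x = Cmod x.
Proof.
  destruct x as [x1 x2]. unfold Cmod. simpl.
  change (prod_norm (K := R_AbsRing) (U := R_NormedModule) (V := R_NormedModule) (x1, x2)
          = sqrt (x1 * (x1 * 1) + x2 * (x2 * 1))).
  unfold prod_norm. simpl. unfold abs; simpl. f_equal.
  change (norm x1) with (Rabs x1). change (norm x2) with (Rabs x2).
  rewrite !Rmult_1_r, <- !Rsqr_def, <- !Rsqr_abs. reflexivity.
Qed.

Lemma scal_C_R (s : R) (y : C) : scal (V := C_R_ModuleSpace) s y = (RtoC s * y)%C.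
Proof.
  destruct y; unfold RtoC, Cmult, scal; simpl. unfold prod_scal, scal; simpl.
  unfold mult; simpl. f_equal; ring.
Qed.

Lemma line_integrand_continuous g a b s :
  Ccontinuous_at g (a + RtoC s * (b - a))%C ->
  @continuous R_UniformSpace (NormedModule.UniformSpace _ C_R_CompleteNormedModule)
    (line_integrand g a b) s.
Proof.
  intros Hg P HP.
  apply (@locally_norm_le_locally R_AbsRing C_R_NormedModule) in HP.
  destruct HP as [eps HP].
  set (c := Cmod (b - a) + 1).
  assert (Hc : 0 < c) by (unfold c; pose proof (Cmod_ge_0 (b - a)); lra).
  destruct (Hg (eps / c)) as [d [Hd Hgd]]; [apply Rdiv_lt_0_compat; [apply cond_pos | lra]|].
  exists (mkposreal (d / c) (Rdiv_lt_0_compat _ _ Hd Hc)). intros t Ht. apply HP.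
  unfold ball_norm. rewrite norm_C_R. simpl in Ht. change (Rabs (t - s) < d / c) in Ht.
  change (Cmod (line_integrand g a b t - line_integrand g a b s)%C < eps).
  unfold line_integrand.
  replace (g (a + RtoC t * (b - a)) * (b - a) - g (a + RtoC s * (b - a)) * (b - a))%C
    with ((g (a + RtoC t * (b - a)) - g (a + RtoC s * (b - a))) * (b - a))%C by ring.
  rewrite Cmod_mult.
  assert (Hpt : Cmod (a + RtoC t * (b - a) - (a + RtoC s * (b - a)))%C < d).
  { replace (a + RtoC t * (b - a) - (a + RtoC s * (b - a)))%C with (RtoC (t - s) * (b - a))%C
      by (rewrite RtoC_minus; ring).
    rewrite Cmod_RtoC_mult.
    apply Rle_lt_trans with (Rabs (t - s) * c).
    { apply Rmult_le_compat_l; [apply Rabs_pos | unfold c; lra]. }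
    apply (Rmult_lt_compat_r c) in Ht; [|lra].
    replace (d / c * c) with d in Ht by (field; lra). exact Ht. }
  specialize (Hgd _ Hpt).
  apply Rle_lt_trans with (Cmod (g (a + RtoC t * (b - a)) - g (a + RtoC s * (b - a)))%C * c).
  { apply Rmult_le_compat_l; [apply Cmod_ge_0 | unfold c; lra]. }
  apply (Rmult_lt_compat_r c) in Hgd; [|lra].
  replace (eps / c * c) with (pos eps) in Hgd by (field; lra). exact Hgd.
Qed.

Lemma ex_RInt_line_integrand g a b u v : 0 <= u -> u <= v -> v <= 1 ->
  continuous_on_segment g a b ->
  ex_RInt (V := C_R_CompleteNormedModule) (line_integrand g a b) u v.
Proof.
  intros Hu Huv Hv Hg. apply ex_RInt_continuous. intros s Hs.
  rewrite Rmin_left, Rmax_right in Hs by lra.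
  apply line_integrand_continuous, Hg. lra.
Qed.

Lemma line_integral_ext g1 g2 a b : (forall x, g1 x = g2 x) ->
  line_integral g1 a b = line_integral g2 a b.
Proof.
  intros H. apply (RInt_ext (V := C_R_CompleteNormedModule)). intros s _.
  unfold line_integrand. rewrite H. reflexivity.
Qed.

Lemma line_integral_reparam g a b a' b' (k q : R) :
  (forall y, a' + RtoC y * (b' - a') = a + RtoC (k * y + q) * (b - a))%C ->
  (b' - a' = RtoC k * (b - a))%C ->
  ex_RInt (V := C_R_CompleteNormedModule) (line_integrand g a b) q (k + q) ->
  line_integral g a' b' = RInt (V := C_R_CompleteNormedModule) (line_integrand g a b) q (k + q).
Proof.
  intros Hpt Hdir Hex. unfold line_integral.
  assert (E := RInt_comp_lin (V := C_R_CompleteNormedModule) (line_integrand g a b) k q 0 1).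
  replace (k * 0 + q) with q in E by ring. replace (k * 1 + q) with (k + q) in E by ring.
  rewrite <- E by exact Hex.
  apply (RInt_ext (V := C_R_CompleteNormedModule)). intros y _.
  rewrite scal_C_R. unfold line_integrand. rewrite Hpt, Hdir. simpl. ring.
Qed.

Definition mid (x y : C) : C := ((x + y) / RtoC 2)%C.

Lemma line_integral_split g a b : continuous_on_segment g a b ->
  line_integral g a b = (line_integral g a (mid a b) + line_integral g (mid a b) b)%C.
Proof.
  intros Hg. unfold mid.
  assert (Hhalf : RtoC (1 / 2) = (/ RtoC 2)%C) by (rewrite <- RtoC_inv by lra; f_equal; lra).
  rewrite (line_integral_reparam g a b a ((a + b) / RtoC 2) (1 / 2) 0),
          (line_integral_reparam g a b ((a + b) / RtoC 2) b (1 / 2) (1 / 2)).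
  - replace (1 / 2 + 0) with (1 / 2) by lra. replace (1 / 2 + 1 / 2) with 1 by lra.
    symmetry. apply (RInt_Chasles (V := C_R_CompleteNormedModule));
      apply ex_RInt_line_integrand; auto; lra.
  - intros y. rewrite RtoC_plus, RtoC_mult, Hhalf. field.
  - rewrite Hhalf. field.
  - apply ex_RInt_line_integrand; auto; lra.
  - intros y. rewrite RtoC_plus, RtoC_mult, Hhalf. field.
  - rewrite Hhalf. field.
  - apply ex_RInt_line_integrand; auto; lra.
Qed.

Lemma line_integral_swap g a b : continuous_on_segment g a b ->
  line_integral g b a = (- line_integral g a b)%C.
Proof.
  intros Hg.
  rewrite (line_integral_reparam g a b b a (-1) 1).
  - replace (-1 + 1) with 0 by ring.
    rewrite <- (opp_RInt_swap (V := C_R_CompleteNormedModule))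
      by (apply ex_RInt_line_integrand; auto; lra).
    reflexivity.
  - intros y. rewrite RtoC_plus, RtoC_mult. ring.
  - ring.
  - replace (-1 + 1) with 0 by ring. apply ex_RInt_swap, ex_RInt_line_integrand; auto; lra.
Qed.

Lemma line_integral_norm_le g a b K : continuous_on_segment g a b ->
  (forall s, 0 <= s <= 1 -> Cmod (g (a + RtoC s * (b - a))%C) <= K) ->
  Cmod (line_integral g a b) <= Cmod (b - a)%C * K.
Proof.
  intros Hg HK. unfold line_integral. rewrite <- norm_C_R.
  replace (Cmod (b - a)%C * K) with ((1 - 0) * (Cmod (b - a)%C * K)) by ring.
  apply (norm_RInt_le_const (V := C_R_CompleteNormedModule) (line_integrand g a b) 0 1);
    [lra| |].
  - intros s Hs. rewrite norm_C_R. unfold line_integrand. rewrite Cmod_mult, Rmult_comm.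
    apply Rmult_le_compat_l; [apply Cmod_ge_0 | apply HK; lra].
  - apply RInt_correct, ex_RInt_line_integrand; auto; lra.
Qed.

Lemma line_integral_minus g h a b :
  continuous_on_segment g a b -> continuous_on_segment h a b ->
  line_integral (fun x => g x - h x)%C a b = (line_integral g a b - line_integral h a b)%C.
Proof.
  intros Hg Hh. unfold line_integral.
  rewrite <- (RInt_minus (V := C_R_CompleteNormedModule))
    by (apply ex_RInt_line_integrand; auto; lra).
  apply (RInt_ext (V := C_R_CompleteNormedModule)). intros s _.
  change (line_integrand (fun x => g x - h x)%C a b s
          = (line_integrand g a b s - line_integrand h a b s)%C).
  unfold line_integrand. ring.
Qed.

Lemma line_integral_scal g (c : R) a b : continuous_on_segment g a b ->
  line_integral (fun x => RtoC c * g x)%C a b = (RtoC c * line_integral g a b)%C.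
Proof.
  intros Hg. unfold line_integral. rewrite <- scal_C_R.
  rewrite <- (RInt_scal (V := C_R_CompleteNormedModule))
    by (apply ex_RInt_line_integrand; auto; lra).
  apply (RInt_ext (V := C_R_CompleteNormedModule)). intros s _.
  rewrite scal_C_R. unfold line_integrand. symmetry. apply Cmult_assoc.
Qed.

Lemma line_integral_affine al be a b :
  line_integral (fun x => al + be * x)%C a b = (al * (b - a) + be * (b * b - a * a) / RtoC 2)%C.
Proof.
  set (c1 := ((al + be * a) * (b - a))%C).
  set (c2 := (be * (b - a) * (b - a))%C).
  set (F := fun s : R => (RtoC s * c1 + RtoC (s * s / 2) * c2)%C).
  assert (HF : is_RInt (V := C_R_CompleteNormedModule)
                 (line_integrand (fun x => al + be * x)%C a b) 0 1 (minus (F 1) (F 0))).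
  { apply (is_RInt_derive (V := C_R_CompleteNormedModule)).
    - intros x _.
      assert (E : line_integrand (fun x => al + be * x)%C a b x = (RtoC 1 * c1 + RtoC x * c2)%C)
        by (unfold line_integrand, c1, c2; ring).
      assert (D : is_derive (K := R_AbsRing) (V := C_R_NormedModule)
                    (fun s => plus (scal s c1) (scal (s * s / 2) c2)) x
                    (plus (scal (@one R_Ring) c1) (scal x c2))).
      { apply (is_derive_plus (K := R_AbsRing) (V := C_R_NormedModule)).
        - apply (is_derive_scal_l (K := R_AbsRing) (V := C_R_NormedModule) (fun s => s)).
          apply (is_derive_id (K := R_AbsRing)).
        - apply (is_derive_scal_l (K := R_AbsRing) (V := C_R_NormedModule) (fun s => s * s / 2)).
          auto_derive; [auto | field]. }
      rewrite E. rewrite !scal_C_R in D.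
      eapply is_derive_ext; [|exact D]. intros t. unfold F. rewrite !scal_C_R. reflexivity.
    - intros x _. apply line_integrand_continuous, Ccontinuous_affine. }
  apply is_RInt_unique in HF. unfold line_integral. rewrite HF.
  change ((F 1 - F 0)%C = (al * (b - a) + be * (b * b - a * a) / RtoC 2)%C).
  unfold F, c1, c2.
  replace (1 * 1 / 2) with (/ 2) by field. replace (0 * 0 / 2) with 0 by field.
  rewrite RtoC_inv by lra. field.
Qed.

Lemma line_integral_const k a b : line_integral (fun _ => k) a b = (k * (b - a))%C.
Proof.
  rewrite (line_integral_ext _ (fun x => k + RtoC 0 * x)%C) by (intros; ring).
  rewrite line_integral_affine. field.
Qed.

Lemma seg_integral_line_integral h z : seg_integral h z = line_integral h (RtoC 0) z.
Proof.
  apply (RInt_ext (V := C_R_CompleteNormedModule)). intros s _. unfold line_integrand.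
  replace (RtoC 0 + RtoC s * (z - RtoC 0))%C with (RtoC s * z)%C by ring.
  replace (z - RtoC 0)%C with z by ring. reflexivity.
Qed.

Lemma segment_point_le (R0 : R) (a b : C) (s : R) :
  Cmod a <= R0 -> Cmod b <= R0 -> 0 <= s <= 1 -> Cmod (a + RtoC s * (b - a))%C <= R0.
Proof.
  intros Ha Hb Hs.
  replace (a + RtoC s * (b - a))%C with (RtoC (1 - s) * a + RtoC s * b)%C
    by (rewrite RtoC_minus; ring).
  eapply Rle_trans; [apply Cmod_triangle|]. rewrite !Cmod_RtoC_mult, !Rabs_pos_eq by lra.
  apply Rle_trans with ((1 - s) * R0 + s * R0); [|lra].
  apply Rplus_le_compat; apply Rmult_le_compat_l; lra.
Qed.

Lemma continuous_on_segment_cball g (R0 : R) a b :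
  (forall x, Cmod x <= R0 -> Ccontinuous_at g x) -> Cmod a <= R0 -> Cmod b <= R0 ->
  continuous_on_segment g a b.
Proof. intros Hg Ha Hb s Hs. apply Hg, segment_point_le; auto. Qed.

(** * Goursat's lemma *)

Lemma mid_le (R0 : R) x y : Cmod x <= R0 -> Cmod y <= R0 -> Cmod (mid x y) <= R0.
Proof. intros Hx Hy. unfold mid. rewrite Cmod_half. pose proof (Cmod_triangle x y). lra. Qed.

Definition triangle : Type := C * C * C.

Definition tri_integral (g : C -> C) (T : triangle) : C :=
  let '(a, b, c) := T in (line_integral g a b + line_integral g b c + line_integral g c a)%C.

Definition tri_vertex (T : triangle) : C := let '(a, _, _) := T in a.

Definition quarter0 (T : triangle) : triangle := let '(a, b, c) := T in (a, mid a b, mid c a).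
Definition quarter1 (T : triangle) : triangle := let '(a, b, c) := T in (mid a b, b, mid b c).
Definition quarter2 (T : triangle) : triangle := let '(a, b, c) := T in (mid c a, mid b c, c).
Definition quarter3 (T : triangle) : triangle :=
  let '(a, b, c) := T in (mid a b, mid b c, mid c a).

Definition tri_fits (R0 L : R) (T : triangle) : Prop :=
  let '(a, b, c) := T in
  Cmod a <= R0 /\ Cmod b <= R0 /\ Cmod c <= R0 /\
  Cmod (b - a)%C <= L /\ Cmod (c - b)%C <= L /\ Cmod (a - c)%C <= L.

Lemma tri_integral_affine al be T : tri_integral (fun x => al + be * x)%C T = RtoC 0.
Proof. destruct T as [[a b] c]. simpl. rewrite !line_integral_affine. field. Qed.

Lemma quarters_fit (R0 L : R) T : tri_fits R0 L T ->
  forall Q, Q = quarter0 T \/ Q = quarter1 T \/ Q = quarter2 T \/ Q = quarter3 T ->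
  tri_fits R0 (L / 2) Q /\ Cmod (tri_vertex Q - tri_vertex T)%C <= L.
Proof.
  destruct T as [[a b] c]. intros [Ha [Hb [Hc [Hab [Hbc Hca]]]]] Q HQ.
  assert (Mab := mid_le R0 a b Ha Hb). assert (Mbc := mid_le R0 b c Hb Hc).
  assert (Mca := mid_le R0 c a Hc Ha).
  assert (L0 : 0 <= L) by (pose proof (Cmod_ge_0 (b - a)%C); lra).
  assert (Hhalf : forall u v : C, (u = v / RtoC 2 \/ u = - (v / RtoC 2))%C -> Cmod v <= L ->
                               Cmod u <= L / 2).
  { intros u v [-> | ->] Hv; rewrite ?Cmod_opp, Cmod_half; lra. }
  repeat destruct HQ as [-> | HQ]; try subst Q; simpl;
    repeat split; auto;
    try (replace (a - a)%C with (RtoC 0) by ring; rewrite Cmod_0; lra);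
    (apply Rle_trans with (L / 2); [|lra];
     first [ eapply (Hhalf _ (b - a)%C); [(left + right); unfold mid; field | exact Hab]
           | eapply (Hhalf _ (c - b)%C); [(left + right); unfold mid; field | exact Hbc]
           | eapply (Hhalf _ (a - c)%C); [(left + right); unfold mid; field | exact Hca] ]).
Qed.

Lemma pow2_pos n : 0 < 2 ^ n.
Proof. apply pow_lt. lra. Qed.

Lemma exists_div_pow2_lt (c eps : R) : 0 <= c -> 0 < eps -> exists n, c / 2 ^ n < eps.
Proof.
  intros Hc He.
  destruct (archimed_cor1 (eps / (c + 1))) as [N [HN1 HN2]]; [apply Rdiv_lt_0_compat; lra|].
  exists N.
  assert (Hpow : INR N + 1 <= 2 ^ N).
  { clear. induction N as [|N IH]; [simpl; lra|]. rewrite S_INR. simpl.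
    pose proof (pos_INR N). lra. }
  pose proof (pow2_pos N).
  assert (HI : 0 < INR N) by (apply lt_0_INR; auto).
  apply Rle_lt_trans with ((c + 1) / INR N).
  { unfold Rdiv. apply Rmult_le_compat; try lra.
    - left. apply Rinv_0_lt_compat; lra.
    - apply Rinv_le_contravar; lra. }
  apply (Rmult_lt_compat_l (c + 1)) in HN1; [|lra].
  replace ((c + 1) * (eps / (c + 1))) with eps in HN1 by (field; lra).
  exact HN1.
Qed.

Lemma le_of_le_add_div_pow2 (a b c : R) : 0 <= c -> (forall n, a <= b + c / 2 ^ n) -> a <= b.
Proof.
  intros Hc H. destruct (Rle_dec a b) as [|Hab]; auto. exfalso.
  destruct (exists_div_pow2_lt c (a - b)) as [n Hn]; [auto | lra|].
  specialize (H n). lra.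
Qed.

Lemma geometric_cauchy_limit_R (r : nat -> R) (K : R) : 0 <= K ->
  (forall n, Rabs (r (S n) - r n) <= K / 2 ^ n) ->
  exists p, forall n, Rabs (r n - p) <= 2 * K / 2 ^ n.
Proof.
  intros HK Hr.
  set (u := fun n => r n - 2 * K / 2 ^ n).
  set (w := fun n => r n + 2 * K / 2 ^ n).
  assert (Hstep : forall n, u n <= u (S n) /\ w (S n) <= w n).
  { intros n. unfold u, w. specialize (Hr n). apply Rabs_le_between in Hr.
    pose proof (pow2_pos n). simpl.
    replace (2 * K / (2 * 2 ^ n)) with (K / 2 ^ n) by (field; lra).
    replace (2 * K / 2 ^ n) with (K / 2 ^ n + K / 2 ^ n) by (field; lra). lra. }
  assert (Hmono : forall n k, u n <= u (n + k)%nat /\ w (n + k)%nat <= w n).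
  { intros n k. induction k as [|k IH]; rewrite ?Nat.add_0_r; [lra|].
    rewrite Nat.add_succ_r. specialize (Hstep (n + k)%nat). lra. }
  assert (Huw : forall m n, u m <= w n).
  { intros m n. destruct (Hmono m n) as [Hu _]. destruct (Hmono n m) as [_ Hw].
    rewrite Nat.add_comm in Hw.
    assert (0 <= 2 * K / 2 ^ (m + n))
      by (pose proof (pow2_pos (m + n)); apply Rdiv_le_0_compat; lra).
    unfold u, w in *. lra. }
  destruct (completeness (fun x => exists m, x = u m)) as [p [Hub Hlub]].
  { exists (w O). intros x [m ->]. apply Huw. }
  { exists (u O), O. reflexivity. }
  exists p. intros n.
  assert (u n <= p) by (apply Hub; exists n; reflexivity).
  assert (p <= w n) by (apply Hlub; intros x [m ->]; apply Huw).
  apply Rabs_le_between. unfold u, w in *. lra.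
Qed.

Lemma geometric_cauchy_limit_C (x : nat -> C) (K : R) : 0 <= K ->
  (forall n, Cmod (x (S n) - x n)%C <= K / 2 ^ n) ->
  exists p, forall n, Cmod (x n - p)%C <= 4 * K / 2 ^ n.
Proof.
  intros HK Hx.
  assert (Hcomp : forall c : C, Rabs (fst c) <= Cmod c /\ Rabs (snd c) <= Cmod c).
  { intros c. pose proof (Rmax_Cmod c).
    pose proof (Rmax_l (Rabs (fst c)) (Rabs (snd c))).
    pose proof (Rmax_r (Rabs (fst c)) (Rabs (snd c))). lra. }
  destruct (geometric_cauchy_limit_R (fun n => fst (x n)) K HK) as [p1 Hp1].
  { intros n. eapply Rle_trans; [|apply (Hx n)]. apply (Hcomp (x (S n) - x n)%C). }
  destruct (geometric_cauchy_limit_R (fun n => snd (x n)) K HK) as [p2 Hp2].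
  { intros n. eapply Rle_trans; [|apply (Hx n)]. apply (Hcomp (x (S n) - x n)%C). }
  exists (p1, p2). intros n.
  eapply Rle_trans; [apply Cmod_2Rmax|].
  assert (Hsqrt : sqrt 2 <= 2).
  { rewrite <- (sqrt_square 2) at 2 by lra. apply sqrt_le_1_alt. lra. }
  assert (Hmax : Rmax (Rabs (fst (x n - (p1, p2))%C)) (Rabs (snd (x n - (p1, p2))%C))
                 <= 2 * K / 2 ^ n) by (apply Rmax_lub; [apply Hp1 | apply Hp2]).
  assert (0 <= 2 * K / 2 ^ n) by (pose proof (pow2_pos n); apply Rdiv_le_0_compat; lra).
  replace (4 * K / 2 ^ n) with (2 * (2 * K / 2 ^ n)) by (field; pose proof (pow2_pos n); lra).
  pose proof (Rmax_l (Rabs (fst (x n - (p1, p2))%C)) (Rabs (snd (x n - (p1, p2))%C))).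
  pose proof (Rabs_pos (fst (x n - (p1, p2))%C)).
  pose proof (sqrt_pos 2). apply Rmult_le_compat; lra.
Qed.

Lemma Cmod_eq_0_of_le_mul_eps (x : C) (K : R) :
  (forall eps, 0 < eps -> Cmod x <= K * eps) -> x = RtoC 0.
Proof.
  intros H. apply Cmod_eq_0, Rle_antisym; [|apply Cmod_ge_0].
  apply le_epsilon. intros e He.
  destruct (Rle_dec K 0) as [HK|HK].
  - specialize (H e He). nra.
  - specialize (H (e / K) ltac:(apply Rdiv_lt_0_compat; lra)).
    replace (K * (e / K)) with e in H by (field; lra). lra.
Qed.

Section Subdivision.

Variables (g : C -> C) (R0 : R).
Hypothesis g_cont : forall x, Cmod x <= R0 -> Ccontinuous_at g x.

Lemma tri_integral_quarters a b c : Cmod a <= R0 -> Cmod b <= R0 -> Cmod c <= R0 ->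
  tri_integral g (a, b, c) =
  (tri_integral g (quarter0 (a, b, c)) + tri_integral g (quarter1 (a, b, c))
   + tri_integral g (quarter2 (a, b, c)) + tri_integral g (quarter3 (a, b, c)))%C.
Proof.
  intros Ha Hb Hc.
  assert (Mab := mid_le R0 a b Ha Hb). assert (Mbc := mid_le R0 b c Hb Hc).
  assert (Mca := mid_le R0 c a Hc Ha).
  simpl.
  rewrite (line_integral_split g a b), (line_integral_split g b c), (line_integral_split g c a)
    by (apply (continuous_on_segment_cball g R0); auto).
  rewrite (line_integral_swap g (mid a b) (mid c a)),
          (line_integral_swap g (mid b c) (mid a b)),
          (line_integral_swap g (mid c a) (mid b c))
    by (apply (continuous_on_segment_cball g R0); auto).
  ring.
Qed.

Definition next_triangle (T : triangle) : triangle :=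
  if Rle_dec (Cmod (tri_integral g T)) (4 * Cmod (tri_integral g (quarter0 T))) then quarter0 T
  else if Rle_dec (Cmod (tri_integral g T)) (4 * Cmod (tri_integral g (quarter1 T))) then quarter1 T
  else if Rle_dec (Cmod (tri_integral g T)) (4 * Cmod (tri_integral g (quarter2 T))) then quarter2 T
  else quarter3 T.

Lemma next_triangle_integral L T : tri_fits R0 L T ->
  Cmod (tri_integral g T) <= 4 * Cmod (tri_integral g (next_triangle T)).
Proof.
  intros HT. unfold next_triangle.
  destruct (Rle_dec _ _) as [H0|H0]; auto.
  destruct (Rle_dec _ _) as [H1|H1]; auto.
  destruct (Rle_dec _ _) as [H2|H2]; auto.
  destruct T as [[a b] c]. destruct HT as [Ha [Hb [Hc _]]].
  rewrite (tri_integral_quarters a b c Ha Hb Hc) in *.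
  set (t0 := tri_integral g (quarter0 (a, b, c))) in *.
  set (t1 := tri_integral g (quarter1 (a, b, c))) in *.
  set (t2 := tri_integral g (quarter2 (a, b, c))) in *.
  set (t3 := tri_integral g (quarter3 (a, b, c))) in *.
  pose proof (Cmod_triangle (t0 + t1 + t2) t3).
  pose proof (Cmod_triangle (t0 + t1) t2).
  pose proof (Cmod_triangle t0 t1).
  lra.
Qed.

Lemma next_triangle_fits L T : tri_fits R0 L T ->
  tri_fits R0 (L / 2) (next_triangle T) /\
  Cmod (tri_vertex (next_triangle T) - tri_vertex T)%C <= L.
Proof.
  intros HT. apply (quarters_fit R0 L T HT). unfold next_triangle.
  repeat destruct (Rle_dec _ _); tauto.
Qed.

Definition nested_triangle (T : triangle) (n : nat) : triangle := Nat.iter n next_triangle T.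

Lemma nested_triangle_fits L T n : tri_fits R0 L T ->
  tri_fits R0 (L / 2 ^ n) (nested_triangle T n) /\
  Cmod (tri_integral g T) <= 4 ^ n * Cmod (tri_integral g (nested_triangle T n)).
Proof.
  intros HT. induction n as [|n [Hfit Hint]].
  - simpl. replace (L / 1) with L by field. split; [exact HT | lra].
  - change (nested_triangle T (S n)) with (next_triangle (nested_triangle T n)).
    split.
    + replace (L / 2 ^ S n) with (L / 2 ^ n / 2) by (simpl; pose proof (pow2_pos n); field; lra).
      apply (next_triangle_fits _ _ Hfit).
    + pose proof (next_triangle_integral _ _ Hfit).
      pose proof (pow_le 4 n ltac:(lra)). simpl. nra.
Qed.

Lemma nested_triangle_limit L T : tri_fits R0 L T ->
  exists p, Cmod p <= R0 /\
    forall n, Cmod (tri_vertex (nested_triangle T n) - p)%C <= 4 * (L / 2 ^ n).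
Proof.
  intros HT.
  assert (HL : 0 <= L).
  { destruct T as [[a b] c]. destruct HT as [_ [_ [_ [Hab _]]]].
    pose proof (Cmod_ge_0 (b - a)%C). lra. }
  pose proof (fun n => proj1 (nested_triangle_fits L T n HT)) as Hfit.
  destruct (geometric_cauchy_limit_C (fun n => tri_vertex (nested_triangle T n)) L HL)
    as [p Hp].
  { intros n. apply (next_triangle_fits _ _ (Hfit n)). }
  assert (Hp' : forall n, Cmod (tri_vertex (nested_triangle T n) - p)%C <= 4 * (L / 2 ^ n)).
  { intros n. specialize (Hp n). pose proof (pow2_pos n).
    replace (4 * (L / 2 ^ n)) with (4 * L / 2 ^ n) by (field; lra). exact Hp. }
  exists p. split; [|exact Hp'].
  apply (le_of_le_add_div_pow2 _ R0 (4 * L)); [lra|]. intros n.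
  specialize (Hp' n). specialize (Hfit n).
  destruct (nested_triangle T n) as [[a b] c]. destruct Hfit as [Ha _].
  simpl in Hp'. pose proof (Cmod_le_add_minus p a) as Hpa. rewrite Cmod_minus_sym in Hpa.
  pose proof (pow2_pos n). replace (4 * L / 2 ^ n) with (4 * (L / 2 ^ n)) by (field; lra).
  lra.
Qed.

End Subdivision.

Section NearDerivative.

Variables (g : C -> C) (R0 : R) (p l : C) (eps del : R).
Hypothesis g_cont : forall x, Cmod x <= R0 -> Ccontinuous_at g x.
Hypothesis g_near_p : forall w, Cmod (w - p)%C < del ->
  Cmod (g w - g p - l * (w - p))%C <= eps * Cmod (w - p)%C.
Hypothesis eps_ge0 : 0 <= eps.

Let tangent (x : C) : C := (g p - l * p + l * x)%C.

Lemma line_integral_sub_tangent_le u v (X : R) : Cmod u <= R0 -> Cmod v <= R0 ->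
  Cmod (u - p)%C <= X -> Cmod (v - p)%C <= X -> X < del ->
  Cmod (line_integral (fun x => g x - tangent x)%C u v) <= Cmod (v - u)%C * (eps * X).
Proof.
  intros Hu Hv Hup Hvp HX.
  apply line_integral_norm_le.
  - intros s Hs. apply Ccontinuous_minus; [|apply Ccontinuous_affine].
    apply g_cont, segment_point_le; auto.
  - intros s Hs. set (q := (u + RtoC s * (v - u))%C).
    assert (Hq : Cmod (q - p)%C <= X).
    { replace (q - p)%C with ((u - p) + RtoC s * ((v - p) - (u - p)))%C by (unfold q; ring).
      apply segment_point_le; auto. }
    unfold tangent.
    replace (g q - (g p - l * p + l * q))%C with (g q - g p - l * (q - p))%C by ring.
    eapply Rle_trans; [apply g_near_p; lra|]. apply Rmult_le_compat_l; auto.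
Qed.

Lemma tri_integral_near_derivative (Ln : R) T :
  tri_fits R0 Ln T -> Cmod (tri_vertex T - p)%C <= 4 * Ln -> 5 * Ln < del ->
  Cmod (tri_integral g T) <= 15 * eps * (Ln * Ln).
Proof.
  intros HT Hp Hdel.
  destruct T as [[a b] c]. simpl in Hp. destruct HT as [Ha [Hb [Hc [Hab [Hbc Hca]]]]].
  pose proof (Cmod_ge_0 (b - a)%C).
  assert (Hb' : Cmod (b - p)%C <= 5 * Ln).
  { replace (b - p)%C with ((b - a) + (a - p))%C by ring.
    eapply Rle_trans; [apply Cmod_triangle | lra]. }
  assert (Hc' : Cmod (c - p)%C <= 5 * Ln).
  { replace (c - p)%C with (- (a - c) + (a - p))%C by ring.
    eapply Rle_trans; [apply Cmod_triangle | rewrite Cmod_opp; lra]. }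
  assert (Hedge : forall u v, Cmod u <= R0 -> Cmod v <= R0 -> Cmod (u - p)%C <= 5 * Ln ->
                  Cmod (v - p)%C <= 5 * Ln -> Cmod (v - u)%C <= Ln ->
                  Cmod (line_integral (fun x => g x - tangent x)%C u v) <= 5 * eps * (Ln * Ln)).
  { intros u v Hu Hv Hup Hvp Huv.
    eapply Rle_trans; [apply (line_integral_sub_tangent_le u v (5 * Ln)); auto|].
    replace (5 * eps * (Ln * Ln)) with (Ln * (eps * (5 * Ln))) by ring.
    apply Rmult_le_compat_r; [|exact Huv]. apply Rmult_le_pos; lra. }
  assert (Hsplit : tri_integral g (a, b, c) = tri_integral (fun x => g x - tangent x)%C (a, b, c)).
  { rewrite <- (Cplus_0_r (tri_integral (fun x => g x - tangent x)%C (a, b, c))).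
    rewrite <- (tri_integral_affine (g p - l * p) l (a, b, c)).
    simpl. rewrite !line_integral_minus;
      try (apply (continuous_on_segment_cball g R0); auto);
      try (intros s _; apply Ccontinuous_affine).
    unfold tangent. ring. }
  rewrite Hsplit. simpl.
  pose proof (Hedge a b Ha Hb ltac:(lra) Hb' Hab).
  pose proof (Hedge b c Hb Hc Hb' Hc' Hbc).
  pose proof (Hedge c a Hc Ha Hc' ltac:(lra) Hca).
  eapply Rle_trans; [apply Cmod_triangle|].
  eapply Rle_trans; [apply Rplus_le_compat_r, Cmod_triangle|].
  lra.
Qed.

End NearDerivative.

Section Goursat.

Variables (g : C -> C) (R0 : R).
Hypothesis g_diff : forall x, Cmod x <= R0 -> exists l, is_Cderive g x l.

Lemma cball_continuous : forall x, Cmod x <= R0 -> Ccontinuous_at g x.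
Proof. intros x Hx. destruct (g_diff x Hx) as [l Hl]. exact (is_Cderive_continuous _ _ _ Hl). Qed.

Theorem goursat a b c : Cmod a <= R0 -> Cmod b <= R0 -> Cmod c <= R0 ->
  tri_integral g (a, b, c) = RtoC 0.
Proof.
  intros Ha Hb Hc.
  set (T := (a, b, c) : triangle).
  set (L := Cmod (b - a)%C + Cmod (c - b)%C + Cmod (a - c)%C).
  pose proof (Cmod_ge_0 (b - a)%C). pose proof (Cmod_ge_0 (c - b)%C).
  pose proof (Cmod_ge_0 (a - c)%C).
  assert (HT : tri_fits R0 L T) by (unfold T, L; repeat split; auto; lra).
  destruct (nested_triangle_limit g R0 cball_continuous L T HT) as [p [Hpin Hp]].
  destruct (g_diff p Hpin) as [l Hl].
  apply (Cmod_eq_0_of_le_mul_eps _ (15 * (L * L))). intros eps Heps.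
  destruct (Hl eps Heps) as [del [Hdel Hd]].
  destruct (exists_div_pow2_lt (5 * L) del) as [n Hn]; [unfold L; lra | auto |].
  destruct (nested_triangle_fits g R0 cball_continuous L T n HT) as [Hfit Hint].
  pose proof (pow2_pos n).
  assert (Hsmall := tri_integral_near_derivative g R0 p l eps del cball_continuous Hd
                      ltac:(lra) (L / 2 ^ n) _ Hfit (Hp n)
                      ltac:(replace (5 * (L / 2 ^ n)) with (5 * L / 2 ^ n) by (field; lra);
                            exact Hn)).
  assert (Hscale : 4 ^ n * (15 * eps * (L / 2 ^ n * (L / 2 ^ n))) = 15 * (L * L) * eps).
  { replace 4 with (2 * 2) by ring. rewrite Rpow_mult_distr. field. lra. }
  pose proof (pow_le 4 n ltac:(lra)).
  apply Rmult_le_compat_l with (r := 4 ^ n) in Hsmall; [|lra].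
  lra.
Qed.

End Goursat.

(** * Primitives and segment means *)

Lemma segment_origin_le (z : C) (s : R) : 0 <= s <= 1 ->
  Cmod (RtoC 0 + RtoC s * (z - RtoC 0))%C <= Cmod z.
Proof.
  intros Hs. apply segment_point_le; [rewrite Cmod_0; apply Cmod_ge_0 | lra | exact Hs].
Qed.

Lemma continuous_on_segment_origin g z :
  (forall x, in_disc x -> Ccontinuous_at g x) -> in_disc z -> continuous_on_segment g (RtoC 0) z.
Proof.
  intros Hg Hz s Hs. apply Hg. unfold in_disc in *. pose proof (segment_origin_le z s Hs). lra.
Qed.

Theorem line_integral_primitive g :
  (forall x, in_disc x -> exists l, is_Cderive g x l) ->
  forall z, in_disc z -> is_Cderive (line_integral g (RtoC 0)) z (g z).
Proof.
  intros Hg z Hz. unfold in_disc in *.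
  set (R0 := (1 + Cmod z) / 2).
  assert (Hdiff : forall x, Cmod x <= R0 -> exists l, is_Cderive g x l)
    by (intros x Hx; apply Hg; unfold R0 in Hx; lra).
  pose proof (cball_continuous g R0 Hdiff) as Hcont.
  assert (Hz0 : Cmod z <= R0) by (unfold R0; lra).
  assert (H00 : Cmod (RtoC 0) <= R0) by (rewrite Cmod_0; unfold R0; pose proof (Cmod_ge_0 z); lra).
  intros eps Heps.
  destruct (Hcont z Hz0 eps Heps) as [d [Hd Hgd]].
  exists (Rmin d (R0 - Cmod z)). split; [apply Rmin_pos; [auto | unfold R0; lra]|].
  intros w Hw. pose proof (Rmin_l d (R0 - Cmod z)). pose proof (Rmin_r d (R0 - Cmod z)).
  assert (Hw0 : Cmod w <= R0) by (pose proof (Cmod_le_add_minus w z); lra).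
  assert (Hseg : forall a b, Cmod a <= R0 -> Cmod b <= R0 -> continuous_on_segment g a b)
    by (intros; apply (continuous_on_segment_cball g R0); auto).
  assert (Hincr : (line_integral g (RtoC 0) w - line_integral g (RtoC 0) z - g z * (w - z)
                   = line_integral (fun x => g x - g z) z w)%C).
  { replace (line_integral g (RtoC 0) w)
      with (line_integral g (RtoC 0) z + line_integral g z w - tri_integral g (RtoC 0, z, w))%C
      by (simpl; rewrite (line_integral_swap g (RtoC 0) w (Hseg _ _ H00 Hw0)); ring).
    rewrite (goursat g R0 Hdiff (RtoC 0) z w H00 Hz0 Hw0).
    rewrite line_integral_minus, line_integral_const
      by (auto; intros s _; apply Ccontinuous_const).
    ring. }
  rewrite Hincr, Rmult_comm.
  apply line_integral_norm_le.
  - intros s Hs. apply Ccontinuous_minus; [apply Hseg; auto | apply Ccontinuous_const].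
  - intros s Hs. left. apply Hgd.
    replace (z + RtoC s * (w - z) - z)%C with (RtoC s * (w - z))%C by ring.
    rewrite Cmod_RtoC_mult, Rabs_pos_eq by lra. pose proof (Cmod_ge_0 (w - z)%C). nra.
Qed.

Definition segment_mean (h : C -> C) (z : C) : C :=
  if Ceq_dec z (RtoC 0) then h (RtoC 0) else (/ z * line_integral h (RtoC 0) z)%C.

Lemma segment_mean_ext h1 h2 z : (forall x, h1 x = h2 x) ->
  segment_mean h1 z = segment_mean h2 z.
Proof.
  intros H. unfold segment_mean. destruct (Ceq_dec z (RtoC 0)); [apply H|].
  f_equal. apply line_integral_ext, H.
Qed.

Lemma segment_mean_minus h1 h2 z :
  continuous_on_segment h1 (RtoC 0) z -> continuous_on_segment h2 (RtoC 0) z ->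
  segment_mean (fun x => h1 x - h2 x)%C z = (segment_mean h1 z - segment_mean h2 z)%C.
Proof.
  intros H1 H2. unfold segment_mean. destruct (Ceq_dec z (RtoC 0)); [reflexivity|].
  rewrite line_integral_minus by auto. ring.
Qed.

Lemma segment_mean_scal h (c : R) z : continuous_on_segment h (RtoC 0) z ->
  segment_mean (fun x => RtoC c * h x)%C z = (RtoC c * segment_mean h z)%C.
Proof.
  intros Hh. unfold segment_mean. destruct (Ceq_dec z (RtoC 0)); [reflexivity|].
  rewrite line_integral_scal by auto. ring.
Qed.

Lemma segment_mean_norm_le h z K : continuous_on_segment h (RtoC 0) z ->
  (forall s, 0 <= s <= 1 -> Cmod (h (RtoC s * z)%C) <= K) -> Cmod (segment_mean h z) <= K.
Proof.
  intros Hh HK. unfold segment_mean. destruct (Ceq_dec z (RtoC 0)) as [->|Hz].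
  - specialize (HK 0 ltac:(lra)). rewrite Cmult_0_l in HK. exact HK.
  - assert (Hmz : 0 < Cmod z) by (apply Cmod_gt_0; auto).
    rewrite Cmod_mult, Cmod_inv by auto.
    apply Rmult_le_reg_l with (Cmod z); [auto|].
    rewrite <- Rmult_assoc, Rinv_r, Rmult_1_l by lra.
    replace z with (z - RtoC 0)%C at 2 by ring.
    apply line_integral_norm_le; [auto|].
    intros s Hs. replace (RtoC 0 + RtoC s * (z - RtoC 0))%C with (RtoC s * z)%C by ring. auto.
Qed.

Lemma segment_mean_affine al be z :
  segment_mean (fun x => al + be * x)%C z = (al + be * z / RtoC 2)%C.
Proof.
  unfold segment_mean. destruct (Ceq_dec z (RtoC 0)) as [->|Hz].
  - field.
  - rewrite line_integral_affine. field. exact Hz.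
Qed.

Lemma segment_mean_at_0 h : segment_mean h (RtoC 0) = h (RtoC 0).
Proof. unfold segment_mean. destruct (Ceq_dec (RtoC 0) (RtoC 0)); congruence. Qed.

(* The mean of [h 0 + l0 x] over [0, w] is [h 0 + l0 w / 2]. *)
Lemma segment_mean_derive_0 h l0 :
  (forall x, in_disc x -> Ccontinuous_at h x) -> is_Cderive h (RtoC 0) l0 ->
  is_Cderive (segment_mean h) (RtoC 0) (l0 / RtoC 2)%C.
Proof.
  intros Hcont Hl0 eps Heps.
  destruct (Hl0 eps Heps) as [d [Hd Hhd]].
  exists (Rmin d 1). split; [apply Rmin_pos; lra|].
  intros w Hw. pose proof (Rmin_l d 1). pose proof (Rmin_r d 1).
  replace (w - RtoC 0)%C with w in * by ring.
  set (A := fun x => (h (RtoC 0) + l0 * x)%C).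
  assert (Hseg : continuous_on_segment h (RtoC 0) w)
    by (apply continuous_on_segment_origin; auto; unfold in_disc; lra).
  replace (segment_mean h w - segment_mean h (RtoC 0) - l0 / RtoC 2 * w)%C
    with (segment_mean (fun x => h x - A x) w)%C.
  2:{ rewrite segment_mean_minus by (auto; intros s _; apply Ccontinuous_affine).
      unfold A. rewrite segment_mean_affine, segment_mean_at_0.
      field. }
  apply segment_mean_norm_le.
  - intros s Hs. apply Ccontinuous_minus; [apply Hseg; auto | apply Ccontinuous_affine].
  - intros s Hs.
    assert (Hsw : Cmod (RtoC s * w)%C <= Cmod w).
    { rewrite Cmod_RtoC_mult, Rabs_pos_eq by lra. pose proof (Cmod_ge_0 w). nra. }
    unfold A.
    replace (h (RtoC s * w) - (h (RtoC 0) + l0 * (RtoC s * w)))%C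
      with (h (RtoC s * w) - h (RtoC 0) - l0 * (RtoC s * w - RtoC 0))%C by ring.
    replace (RtoC s * w - RtoC 0)%C with (RtoC s * w)%C by ring.
    specialize (Hhd (RtoC s * w)%C).
    replace (RtoC s * w - RtoC 0)%C with (RtoC s * w)%C in Hhd by ring.
    eapply Rle_trans; [apply Hhd; lra|].
    apply Rmult_le_compat_l; lra.
Qed.

Theorem segment_mean_holomorphic h :
  (forall x, in_disc x -> exists l, is_Cderive h x l) ->
  forall z, in_disc z -> exists l, is_Cderive (segment_mean h) z l.
Proof.
  intros Hh z Hz.
  assert (Hcont : forall x, in_disc x -> Ccontinuous_at h x).
  { intros x Hx. destruct (Hh x Hx) as [l Hl]. exact (is_Cderive_continuous _ _ _ Hl). }
  destruct (Ceq_dec z (RtoC 0)) as [->|Hz0].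
  - destruct (Hh (RtoC 0) Hz) as [l0 Hl0].
    exists (l0 / RtoC 2)%C. exact (segment_mean_derive_0 h l0 Hcont Hl0).
  - assert (Hmz : 0 < Cmod z) by (apply Cmod_gt_0; auto).
    eexists. eapply is_Cderive_ext_loc;
      [|exact (is_Cderive_mult _ _ z _ _ (is_Cderive_inv z Hz0)
                 (line_integral_primitive h Hh z Hz))].
    exists (Cmod z). split; [exact Hmz|]. intros w Hw.
    unfold segment_mean. destruct (Ceq_dec w (RtoC 0)) as [->|]; [|reflexivity].
    replace (RtoC 0 - z)%C with (- z)%C in Hw by ring. rewrite Cmod_opp in Hw. lra.
Qed.

(** * Generalized Cesàro operators *)

Definition cesaro_kernel (t : R) (f : C -> C) : C -> C :=
  fun xi => Cdiv (f xi) (Cminus (RtoC 1) (Cmult (RtoC t) xi)).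

Lemma cesaro_segment_mean t f z : cesaro t f z = segment_mean (cesaro_kernel t f) z.
Proof.
  unfold cesaro, segment_mean.
  destruct (excluded_middle_informative (z = RtoC 0)), (Ceq_dec z (RtoC 0)); try contradiction.
  - unfold cesaro_kernel. subst z.
    replace (Cminus (RtoC 1) (Cmult (RtoC t) (RtoC 0))) with (RtoC 1) by ring. field.
  - rewrite seg_integral_line_integral. reflexivity.
Qed.

Lemma Cmod_one_minus_ge (t : R) (q : C) : 0 <= t <= 1 -> 1 - Cmod q <= Cmod (RtoC 1 - RtoC t * q)%C.
Proof.
  intros Ht. pose proof (Cmod_le_add_minus (RtoC 1) (RtoC t * q)%C) as H.
  rewrite Cmod_1, Cmod_RtoC_mult, Rabs_pos_eq in H by lra.
  pose proof (Cmod_ge_0 q). nra.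
Qed.

Lemma one_minus_neq0 (t : R) (q : C) : 0 <= t <= 1 -> in_disc q ->
  (RtoC 1 - RtoC t * q)%C <> RtoC 0.
Proof.
  intros Ht Hq E. pose proof (Cmod_one_minus_ge t q Ht). unfold in_disc in Hq.
  rewrite E, Cmod_0 in H. lra.
Qed.

Lemma cesaro_kernel_derive t f : 0 <= t <= 1 ->
  (forall z, in_disc z -> exists l, is_Cderive f z l) ->
  forall z, in_disc z -> exists l, is_Cderive (cesaro_kernel t f) z l.
Proof.
  intros Ht Hf z Hz. destruct (Hf z Hz) as [lf Hlf].
  assert (Hnz : (RtoC 1 + - RtoC t * z)%C <> RtoC 0).
  { replace (RtoC 1 + - RtoC t * z)%C with (RtoC 1 - RtoC t * z)%C by ring.
    apply one_minus_neq0; auto. }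
  pose proof (is_Cderive_comp_affine Cinv (RtoC 1) (- RtoC t)%C z _ (is_Cderive_inv _ Hnz)) as Hu.
  eexists. eapply is_Cderive_ext_loc; [|exact (is_Cderive_mult _ _ z _ _ Hlf Hu)].
  exists 1. split; [lra|]. intros w _. unfold cesaro_kernel, Cdiv. do 2 f_equal. ring.
Qed.

Lemma cesaro_kernel_continuous t f : 0 <= t <= 1 -> holomorphic_on_disc f ->
  forall x, in_disc x -> Ccontinuous_at (cesaro_kernel t f) x.
Proof.
  intros Ht Hf x Hx.
  destruct (cesaro_kernel_derive t f Ht (proj1 (holomorphic_on_disc_iff f) Hf) x Hx) as [l Hl].
  exact (is_Cderive_continuous _ _ _ Hl).
Qed.

Theorem cesaro_holomorphic t f : 0 <= t <= 1 -> holomorphic_on_disc f ->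
  holomorphic_on_disc (cesaro t f).
Proof.
  intros Ht Hf. apply holomorphic_on_disc_iff. intros z Hz.
  destruct (segment_mean_holomorphic _
              (cesaro_kernel_derive t f Ht (proj1 (holomorphic_on_disc_iff f) Hf)) z Hz) as [l Hl].
  exists l. eapply is_Cderive_ext_loc; [|exact Hl].
  exists 1. split; [lra|]. intros w _. symmetry. apply cesaro_segment_mean.
Qed.

Lemma cesaro_scal t (c : R) f z : 0 <= t <= 1 -> holomorphic_on_disc f -> in_disc z ->
  cesaro t (fun x => RtoC c * f x)%C z = (RtoC c * cesaro t f z)%C.
Proof.
  intros Ht Hf Hz. rewrite !cesaro_segment_mean.
  rewrite (segment_mean_ext _ (fun x => RtoC c * cesaro_kernel t f x)%C)
    by (intros; unfold cesaro_kernel, Cdiv; ring).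
  apply segment_mean_scal, continuous_on_segment_origin; auto.
  apply cesaro_kernel_continuous; auto.
Qed.

Lemma cesaro_minus t f g z : 0 <= t <= 1 -> holomorphic_on_disc f -> holomorphic_on_disc g ->
  in_disc z -> cesaro t (fsub g f) z = (cesaro t g z - cesaro t f z)%C.
Proof.
  intros Ht Hf Hg Hz. rewrite !cesaro_segment_mean.
  rewrite (segment_mean_ext _ (fun x => cesaro_kernel t g x - cesaro_kernel t f x)%C)
    by (intros; unfold cesaro_kernel, fsub, Cdiv; ring).
  apply segment_mean_minus; apply continuous_on_segment_origin; auto;
    apply cesaro_kernel_continuous; auto.
Qed.

Lemma cesaro_kernel_sub_le t f (q : C) (r : R) : 0 <= t <= 1 -> Cmod q <= r -> r < 1 ->
  Cmod (cesaro_kernel t f q - cesaro_kernel 1 f q)%C <= Cmod (f q) * (1 - t) / ((1 - r) * (1 - r)).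
Proof.
  intros Ht Hqr Hr.
  assert (Hq : in_disc q) by (unfold in_disc; lra).
  pose proof (Cmod_one_minus_ge t q Ht) as Ht1.
  pose proof (Cmod_one_minus_ge 1 q ltac:(lra)) as H11.
  pose proof (one_minus_neq0 t q Ht Hq) as Nt.
  pose proof (one_minus_neq0 1 q ltac:(lra) Hq) as N1.
  pose proof (Cmod_ge_0 (f q)). pose proof (Cmod_ge_0 q).
  assert (E : (cesaro_kernel t f q - cesaro_kernel 1 f q)%C
    = (f q * (RtoC (t - 1) * q) / ((RtoC 1 - RtoC t * q) * (RtoC 1 - RtoC 1 * q)))%C).
  { unfold cesaro_kernel. rewrite RtoC_minus. field.
    split; intro E0; [apply N1 | apply Nt]; rewrite <- E0; ring. }
  rewrite E, Cmod_div, !Cmod_mult, Cmod_R, Rabs_minus_sym, Rabs_pos_eq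
    by (try lra; apply Cmult_neq_0; auto).
  unfold Rdiv. apply Rmult_le_compat.
  - apply Rmult_le_pos; [lra|]. apply Rmult_le_pos; lra.
  - left. apply Rinv_0_lt_compat. apply Rmult_lt_0_compat; lra.
  - apply Rmult_le_compat_l; [lra|]. nra.
  - apply Rinv_le_contravar; [nra|]. apply Rmult_le_compat; lra.
Qed.

Lemma weight_pos v r : is_weight v -> 0 <= r < 1 -> 0 < v r.
Proof. intros [Hpos _] Hr. exact (Hpos r Hr). Qed.

Lemma weight_antitone v r s : is_weight v -> 0 <= r -> r <= s -> s < 1 -> v s <= v r.
Proof. intros [_ [Hmono _]]. exact (Hmono r s). Qed.

Lemma in_disc_0 : in_disc (RtoC 0).
Proof. unfold in_disc. rewrite Cmod_0. lra. Qed.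

Lemma wnorm_ge v f z : in_disc z -> Rbar_le (Cmod (f z) * v (Cmod z)) (wnorm v f).
Proof. intros Hz. apply (Lub_Rbar_correct _). exists z. auto. Qed.

Lemma wnorm_le v f (N : R) :
  (forall z, in_disc z -> Cmod (f z) * v (Cmod z) <= N) -> Rbar_le (wnorm v f) N.
Proof. intros H. apply (Lub_Rbar_correct _). intros x [z [Hz ->]]. exact (H z Hz). Qed.

Lemma wnorm_finite v f : Rbar_lt (wnorm v f) p_infty ->
  exists N : R, wnorm v f = Finite N /\ forall z, in_disc z -> Cmod (f z) * v (Cmod z) <= N.
Proof.
  intros H. pose proof (wnorm_ge v f (RtoC 0) in_disc_0) as H0.
  destruct (wnorm v f) as [N| |] eqn:E; simpl in H, H0; try contradiction.
  exists N. split; [reflexivity|]. intros z Hz.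
  pose proof (wnorm_ge v f z Hz) as Hz'. rewrite E in Hz'. exact Hz'.
Qed.

Lemma wnorm_bound_nonneg v f (N : R) : is_weight v ->
  (forall z, in_disc z -> Cmod (f z) * v (Cmod z) <= N) -> 0 <= N.
Proof.
  intros Hv HN. specialize (HN (RtoC 0) in_disc_0). rewrite Cmod_0 in HN.
  pose proof (weight_pos v 0 Hv ltac:(lra)). pose proof (Cmod_ge_0 (f (RtoC 0))). nra.
Qed.

Lemma opnorm_ge v T f z : in_Hv v f -> Rbar_le (wnorm v f) 1 -> in_disc z ->
  Rbar_le (Cmod (T f z) * v (Cmod z)) (opnorm v T).
Proof.
  intros Hf Hf1 Hz. apply (Lub_Rbar_correct _).
  exists f. split; [exact Hf|]. split; [exact Hf1|]. apply wnorm_ge; exact Hz.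
Qed.

(** * Bounds for [C_1] *)

Section CesaroBounds.

Variables (v : R -> R) (h : C -> C) (N : R).
Hypothesis v_weight : is_weight v.
Hypothesis h_holo : holomorphic_on_disc h.
Hypothesis h_bound : forall z, in_disc z -> Cmod (h z) * v (Cmod z) <= N.

Lemma cesaro_sub_cesaro1_le t z : 0 <= t <= 1 -> in_disc z ->
  Cmod (cesaro t h z - cesaro 1 h z)%C * v (Cmod z) <= N * (1 - t) / ((1 - Cmod z) * (1 - Cmod z)).
Proof.
  intros Ht Hz. unfold in_disc in Hz.
  set (r := Cmod z) in *.
  assert (Hr : 0 <= r) by apply Cmod_ge_0.
  assert (Hvr : 0 < v r) by (apply weight_pos; auto).
  rewrite !cesaro_segment_mean, <- segment_mean_minus
    by (apply continuous_on_segment_origin; auto; apply cesaro_kernel_continuous; auto; lra).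
  apply Rmult_le_reg_r with (/ v r); [apply Rinv_0_lt_compat; lra|].
  rewrite Rmult_assoc, Rinv_r, Rmult_1_r by lra.
  apply segment_mean_norm_le.
  - intros s Hs. apply Ccontinuous_minus; apply cesaro_kernel_continuous; auto; try lra;
      unfold in_disc; pose proof (segment_origin_le z s Hs) as Hs'; fold r in Hs'; lra.
  - intros s Hs. set (q := (RtoC s * z)%C).
    assert (Hq : Cmod q <= r).
    { unfold q. rewrite Cmod_RtoC_mult, Rabs_pos_eq by lra. fold r. nra. }
    assert (Hfq : Cmod (h q) <= N / v r).
    { assert (v r <= v (Cmod q)) by (apply weight_antitone; auto; apply Cmod_ge_0).
      specialize (h_bound q ltac:(unfold in_disc; lra)).
      apply Rmult_le_reg_r with (v r); [lra|].
      replace (N / v r * v r) with N by (field; lra).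
      pose proof (Cmod_ge_0 (h q)). nra. }
    eapply Rle_trans; [apply (cesaro_kernel_sub_le t h q r); lra|].
    apply Rle_trans with (N / v r * (1 - t) / ((1 - r) * (1 - r))); [|right; field; lra].
    unfold Rdiv. apply Rmult_le_compat_r; [left; apply Rinv_0_lt_compat; nra|].
    apply Rmult_le_compat_r; lra.
Qed.

(* Homogeneity of [C_t] lets us normalise [h] to the unit ball of [H^oo_v]. *)
Lemma cesaro_le_opnorm t (M : R) z : 0 <= t <= 1 -> Rbar_le (opnorm v (cesaro t)) M ->
  in_disc z -> Cmod (cesaro t h z) * v (Cmod z) <= Rabs M * N.
Proof.
  intros Ht HM Hz.
  assert (HN : 0 <= N) by exact (wnorm_bound_nonneg v h N v_weight h_bound).
  assert (Hvz : 0 < v (Cmod z)) by (apply weight_pos; auto; split; [apply Cmod_ge_0 | exact Hz]).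
  pose proof (Rabs_pos M). pose proof (Rle_abs M).
  apply le_epsilon. intros e He.
  set (eta := e / (Rabs M + 1)).
  assert (Heta : 0 < eta) by (apply Rdiv_lt_0_compat; lra).
  set (c := / (N + eta)).
  assert (Hc : 0 < c) by (apply Rinv_0_lt_compat; lra).
  set (f := fun x => (RtoC c * h x)%C).
  assert (Hf1 : Rbar_le (wnorm v f) 1).
  { apply wnorm_le. intros q Hq. unfold f.
    rewrite Cmod_mult, Cmod_R, Rabs_pos_eq, Rmult_assoc by lra.
    apply Rle_trans with (c * N); [apply Rmult_le_compat_l; auto; lra|].
    unfold c. apply Rmult_le_reg_l with (N + eta); [lra|].
    rewrite <- Rmult_assoc, Rinv_r by lra. lra. }
  assert (Hf : in_Hv v f).
  { split; [apply holomorphic_on_disc_scal; auto|].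
    destruct (wnorm v f); simpl in *; auto. }
  pose proof (opnorm_ge v (cesaro t) f z Hf Hf1 Hz) as Hop.
  unfold f in Hop. rewrite cesaro_scal in Hop by auto.
  rewrite Cmod_mult, Cmod_R, Rabs_pos_eq, Rmult_assoc in Hop by lra.
  assert (Hc_le : c * (Cmod (cesaro t h z) * v (Cmod z)) <= M).
  { destruct (opnorm v (cesaro t)); simpl in *; try contradiction; lra. }
  apply Rmult_le_compat_l with (r := N + eta) in Hc_le; [|lra].
  unfold c in Hc_le. rewrite <- Rmult_assoc, Rinv_r, Rmult_1_l in Hc_le by lra.
  replace e with ((Rabs M + 1) * eta) by (unfold eta; field; lra).
  nra.
Qed.

Lemma cesaro1_le_opnorm (M : R) z :
  (forall t, 0 <= t < 1 -> Rbar_le (opnorm v (cesaro t)) M) ->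
  in_disc z -> Cmod (cesaro 1 h z) * v (Cmod z) <= Rabs M * N.
Proof.
  intros HM Hz.
  assert (HN : 0 <= N) by exact (wnorm_bound_nonneg v h N v_weight h_bound).
  set (r := Cmod z).
  assert (Hr : 0 <= r < 1) by (split; [apply Cmod_ge_0 | exact Hz]).
  assert (Hvr : 0 < v r) by (apply weight_pos; auto).
  apply le_epsilon. intros e He.
  set (t := 1 - (1 - r) * (1 - r) * (e / (N + 1 + e))).
  assert (Hfrac : 0 < e / (N + 1 + e) < 1).
  { split; [apply Rdiv_lt_0_compat; lra|].
    apply Rmult_lt_reg_r with (N + 1 + e); [lra|].
    replace (e / (N + 1 + e) * (N + 1 + e)) with e by (field; lra). lra. }
  assert (Hsq : 0 < (1 - r) * (1 - r) <= 1) by (split; nra).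
  assert (Ht : 0 <= t < 1) by (unfold t; split; nra).
  pose proof (cesaro_le_opnorm t M z ltac:(lra) (HM t Ht) Hz) as Hbound.
  pose proof (cesaro_sub_cesaro1_le t z ltac:(lra) Hz) as Hdiff. fold r in Hbound, Hdiff.
  replace (N * (1 - t) / ((1 - r) * (1 - r))) with (N * (e / (N + 1 + e))) in Hdiff
    by (unfold t; field; lra).
  assert (N * (e / (N + 1 + e)) <= e).
  { apply Rmult_le_reg_r with (N + 1 + e); [lra|].
    replace (N * (e / (N + 1 + e)) * (N + 1 + e)) with (N * e) by (field; lra). nra. }
  pose proof (Cmod_le_add_minus (cesaro 1 h z) (cesaro t h z)) as Htri.
  rewrite Cmod_minus_sym in Htri.
  apply Rmult_le_compat_r with (r := v r) in Htri; [|lra].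
  lra.
Qed.

Lemma cesaro1_wnorm_le (M : R) :
  (forall t, 0 <= t < 1 -> Rbar_le (opnorm v (cesaro t)) M) ->
  Rbar_le (wnorm v (cesaro 1 h)) (Rabs M * N).
Proof. intros HM. apply wnorm_le. intros z Hz. exact (cesaro1_le_opnorm M z HM Hz). Qed.

End CesaroBounds.

Lemma cesaro1_fsub_wnorm_le v f g (M N : R) : is_weight v ->
  (forall t, 0 <= t < 1 -> Rbar_le (opnorm v (cesaro t)) M) ->
  holomorphic_on_disc f -> holomorphic_on_disc g ->
  (forall z, in_disc z -> Cmod (fsub g f z) * v (Cmod z) <= N) ->
  Rbar_le (wnorm v (fsub (cesaro 1 g) (cesaro 1 f))) (Rabs M * N).
Proof.
  intros Hv HM Hf Hg HN. apply wnorm_le. intros z Hz. unfold fsub at 1.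
  rewrite <- (cesaro_minus 1 f g z ltac:(lra) Hf Hg Hz).
  apply (cesaro1_le_opnorm v (fsub g f) N); auto. apply holomorphic_on_disc_fsub; auto.
Qed.

Theorem proposition2p11 (v : R -> R) :
  is_weight v ->
  (exists M : R, forall t : R, 0 <= t < 1 -> Rbar_le (opnorm v (cesaro t)) M) ->
  (forall f, in_Hv v f -> in_Hv v (cesaro 1 f)) /\
  (forall f, in_Hv v f -> forall eps : R, 0 < eps -> exists delta : R, 0 < delta /\
     forall g, in_Hv v g -> Rbar_lt (wnorm v (fsub g f)) delta ->
       Rbar_lt (wnorm v (fsub (cesaro 1 g) (cesaro 1 f))) eps).
Proof.
  intros Hv [M HM]. pose proof (Rabs_pos M). split.
  - intros f [Hf Hfn]. destruct (wnorm_finite v f Hfn) as [N [_ HN]].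
    split; [apply cesaro_holomorphic; auto; lra|].
    exact (Rbar_le_lt_trans _ (Rabs M * N) p_infty (cesaro1_wnorm_le v f N Hv Hf HN M HM) I).
  - intros f [Hf _] eps Heps.
    exists (eps / (Rabs M + 1)). split; [apply Rdiv_lt_0_compat; lra|].
    intros g [Hg _] Hlt.
    destruct (wnorm_finite v (fsub g f) (Rbar_lt_trans _ _ p_infty Hlt I)) as [N [EN HN]].
    rewrite EN in Hlt. simpl in Hlt.
    assert (HN0 := wnorm_bound_nonneg v _ N Hv HN).
    apply (Rbar_le_lt_trans _ (Rabs M * N));
      [exact (cesaro1_fsub_wnorm_le v f g M N Hv HM Hf Hg HN)|].
    apply Rmult_lt_compat_l with (r := Rabs M + 1) in Hlt; [|lra].
    replace ((Rabs M + 1) * (eps / (Rabs M + 1))) with eps in Hlt by (field; lra).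
    simpl. nra.
Qed.
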